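(* Let $R$ be a commutative ring with identity, $M$ an $R$-module and $a\in R$. Then the $R$-module $M/a\Gamma_{a}(M)$ is $a$-reduced.
   Context: $\Gamma_{a}(M)=\{m\in M \mid a^{k}m=0 \text{ for some } k\in\mathbb{Z}^{+}\}$ and $a\Gamma_{a}(M)=\{am \mid m\in \Gamma_a(M)\}$, a submodule of $M$. An $R$-module $N$ is $a$-reduced if for all $n\in N$, $a^{2}n=0$ implies $an=0$. *)

From mathcomp Require Import all_boot all_algebra.
Set Implicit Arguments. Unset Strict Implicit. Unset Printing Implicit Defensive.
Import GRing.Theory.
Local Open Scope ring_scope.

Definition Gamma (R : comPzRingType) (M : lmodType R) (a : R) (m : M) : Prop :=
  exists k : nat, (0 < k)%N /\ a ^+ k *: m = 0.

Definition aGamma (R : comPzRingType) (M : lmodType R) (a : R) (x : M) : Prop :=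
  exists m : M, Gamma a m /\ x = a *: m.

Definition a_reduced (R : comPzRingType) (N : lmodType R) (a : R) : Prop :=
  forall n : N, a ^+ 2 *: n = 0 -> a *: n = 0.

From mathcomp Require Import all_boot all_algebra.
Local Open Scope ring_scope.
Import GRing.Theory.

(* If [a^2 m = a m'] with [m'] in [Gamma_a(M)], then [m] itself is [a]-torsion,
   so [a m] lies in [a Gamma_a(M)]; in the quotient this is exactly
   [a^2 q = 0 -> a q = 0]. *)

Section Torsion.

Variables (R : comPzRingType) (M : lmodType R) (a : R).

Lemma Gamma_expZ n (m : M) : Gamma a (a ^+ n *: m) -> Gamma a m.
Proof.
case=> k [k_gt0 akm0]; exists (k + n)%N; split; first by rewrite addn_gt0 k_gt0.
by rewrite exprD -scalerA.
Qed.

Lemma aGamma_Gamma (x : M) : aGamma a x -> Gamma a x.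
Proof.
case=> m [[k [k_gt0 akm0]] ->]; exists k; split => //.
by rewrite scalerA -exprSr exprS -scalerA akm0 scaler0.
Qed.

Lemma aGamma_sqrZ (m : M) : aGamma a (a ^+ 2 *: m) -> aGamma a (a *: m).
Proof. by move=> /aGamma_Gamma /Gamma_expZ Gm; exists m. Qed.

End Torsion.

Theorem mainTheorem4 (R : comPzRingType) (M : lmodType R) (a : R)
  (Q : lmodType R) (f : {linear M -> Q}) :
  (forall q : Q, exists m : M, f m = q) ->
  (forall m : M, f m = 0 <-> aGamma a m) ->
  a_reduced Q a.
Proof.
move=> f_surj f_ker q; have [m <-] := f_surj q.
by rewrite -!linearZ => /f_ker /aGamma_sqrZ /f_ker.
Qed.
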